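(* Let $\Gamma_{\mathcal{W}}$ and $t_\lambda$ be as in the context. The stabilizer of $\infty$ in $\Gamma_{\mathcal{W}}$ is the cyclic group generated by $t_\lambda$.
   Context: $\Gamma$ is a geometrically finite, non-cocompact Fuchsian group acting on the upper half-plane $\mathbb{H}$, containing hyperbolic but no parabolic elements, with $\Gamma\backslash\mathbb{H}$ of infinite area, and whose ordinary set contains a neighborhood of $\infty$. For $g=\begin{bmatrix}a&b\\c&d\end{bmatrix}\in\Gamma\setminus\{\mathrm{id}\}$ let $\mathrm{I}(g)=\{z\in\mathbb{H}:|cz+d|=1\}$, $\mathrm{ext}\,\mathrm{I}(g)=\{z:|cz+d|>1\}$, $\mathcal{K}=\bigcap_{g\ne\mathrm{id}}\mathrm{ext}\,\mathrm{I}(g)$; $\Gamma_{\mathrm{REL}}$ is the set of $g$ such that $\mathrm{I}(g)\cap\partial\mathcal{K}$ contains more than one point. With $\mathrm{pr}_\infty(x+iy)=x$, let $\alpha$ (resp. $\beta$) be the largest (resp. smallest) real number with $\partial\mathcal{K}\subseteq\mathrm{pr}_\infty^{-1}([\alpha,\beta])$, fix $\alpha'<\alpha$, $\beta'>\beta$, $\lambda=\beta'-\alpha'$, $t_\lambda=\begin{bmatrix}1&\lambda\\0&1\end{bmatrix}$, and $\mathcal{W}=\mathcal{K}\cap\mathrm{pr}_\infty^{-1}((\alpha',\beta'))$. $\Gamma_{\mathcal{W}}$ is the group generated by $\Gamma_{\mathrm{REL}}\cup\{t_\lambda\}$; it is a Fuchsian group having $\mathcal{W}$ as a fundamental domain.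 *)

From mathcomp Require Import all_boot all_order all_algebra.
From mathcomp Require Import all_classical all_reals all_analysis.
Set Implicit Arguments. Unset Strict Implicit. Unset Printing Implicit Defensive.
Import Order.TTheory GRing.Theory Num.Theory.
Local Open Scope classical_set_scope.
Local Open Scope ring_scope.

Section Defs.
Variable R : realType.

(* ---------- 2x2 real matrices; PSL(2,R) is modelled by SL(2,R) modulo +-1 *)
Record mat := Mat { ma : R; mb : R; mc : R; md : R }.

Definition mdet (g : mat) : R := ma g * md g - mb g * mc g.
Definition mid : mat := Mat 1 0 0 1.
Definition mneg (g : mat) : mat := Mat (- ma g) (- mb g) (- mc g) (- md g).
Definition mmul (g h : mat) : mat :=
  Mat (ma g * ma h + mb g * mc h) (ma g * mb h + mb g * md h)
      (mc g * ma h + md g * mc h) (mc g * mb h + md g * md h).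
(* inverse of a determinant-one matrix *)
Definition minv (g : mat) : mat := Mat (md g) (- mb g) (- mc g) (ma g).

Definition mpow (g : mat) (n : int) : mat :=
  match n with
  | Posz k => iter k (mmul g) mid
  | Negz k => iter k.+1 (mmul (minv g)) mid
  end.

(* the identity of PSL(2,R): the matrices +-I *)
Definition is_id (g : mat) : Prop := g = mid \/ g = mneg mid.

(* ---------- the upper half-plane, points z = x + i y encoded as (x, y) *)
Definition inH (z : R * R) : Prop := 0 < z.2.

(* Moebius action z |-> (a z + b) / (c z + d) *)
Definition act (g : mat) (z : R * R) : R * R :=
  let x := z.1 in let y := z.2 in
  let den := (mc g * x + md g) ^+ 2 + (mc g * y) ^+ 2 in
  (((ma g * x + mb g) * (mc g * x + md g) + ma g * mc g * y ^+ 2) / den,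
   mdet g * y / den).

(* g fixes the point infinity of the extended real line: g(oo) = oo *)
Definition fixes_inf (g : mat) : Prop := mc g = 0.

Definition dist2 (z w : R * R) : R := (z.1 - w.1) ^+ 2 + (z.2 - w.2) ^+ 2.

Definition closH (F : R * R -> Prop) (z : R * R) : Prop :=
  inH z /\ forall e : R, 0 < e -> exists w, F w /\ dist2 w z < e.
Definition intH (F : R * R -> Prop) (z : R * R) : Prop :=
  inH z /\ exists e : R, 0 < e /\ forall w, inH w -> dist2 w z < e -> F w.
Definition bdH (F : R * R -> Prop) (z : R * R) : Prop :=
  closH F z /\ ~ intH F z.

(* Gamma is (the full preimage in SL(2,R) of) a subgroup of PSL(2,R) *)
Definition psl_subgroup (G : mat -> Prop) : Prop :=
  [/\ forall g, G g -> mdet g = 1,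
      G mid, G (mneg mid),
      forall g h, G g -> G h -> G (mmul g h) &
      forall g, G g -> G (minv g)].

Definition discrete (G : mat -> Prop) : Prop :=
  exists e : R, 0 < e /\ forall g, G g -> g <> mid ->
    ~ [/\ `|ma g - 1| < e, `|mb g| < e, `|mc g| < e & `|md g - 1| < e].

Definition fuchsian (G : mat -> Prop) : Prop := psl_subgroup G /\ discrete G.

Definition hyperbolic (g : mat) : Prop := 2 < `|ma g + md g|.
Definition parabolic (g : mat) : Prop := `|ma g + md g| = 2 /\ ~ is_id g.

Definition fundamental_domain (G : mat -> Prop) (F : R * R -> Prop) : Prop :=
  [/\ forall z, F z -> inH z,
      forall g z, G g -> ~ is_id g -> F z -> ~ F (act g z) &
      forall z, inH z -> exists g, G g /\ closH F (act g z)].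

(* open hyperbolic half-planes: bounded by a vertical geodesic or by a
   geodesic semicircle centred on the real axis *)
Inductive hhalf := HLeft of R | HRight of R | HDiskIn of R & R | HDiskOut of R & R.

Definition in_hhalf (h : hhalf) (z : R * R) : Prop :=
  match h with
  | HLeft c => z.1 < c
  | HRight c => c < z.1
  | HDiskIn c r => 0 < r /\ (z.1 - c) ^+ 2 + z.2 ^+ 2 < r ^+ 2
  | HDiskOut c r => 0 < r /\ r ^+ 2 < (z.1 - c) ^+ 2 + z.2 ^+ 2
  end.

(* finite-sided convex hyperbolic polygon = finite intersection of open
   hyperbolic half-planes *)
Fixpoint in_all_hhalf (hs : seq hhalf) (z : R * R) : Prop :=
  match hs with
  | [::] => True
  | h :: hs' => in_hhalf h z /\ in_all_hhalf hs' z
  end.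
Definition polygon (hs : seq hhalf) (z : R * R) : Prop :=
  inH z /\ in_all_hhalf hs z.

Definition geometrically_finite (G : mat -> Prop) : Prop :=
  exists hs : seq hhalf, fundamental_domain G (polygon hs).

(* Gamma \ H is not compact: no compact subset of H (every compact subset
   of H lies in such a box) meets every orbit *)
Definition non_cocompact (G : mat -> Prop) : Prop :=
  ~ exists M d : R, 0 < d /\ forall z, inH z -> exists g, G g /\
      [/\ `|(act g z).1| <= M, d <= (act g z).2 & (act g z).2 <= M].

Definition harea (F : set (R * R)) : \bar R :=
  (\int[(@lebesgue_measure R \x @lebesgue_measure R)%E]_(p in F)
      ((p.2 ^- 2)%:E))%E.

Definition infinite_area (G : mat -> Prop) : Prop :=
  exists F : R * R -> Prop, fundamental_domain G F /\
    measurable (F : set (R * R)) /\ harea F = +oo%E.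

(* limit set: accumulation points in R u {oo} of an orbit G z, z in H *)
Definition limit_point_real (G : mat -> Prop) (x : R) : Prop :=
  exists z, inH z /\ exists u : nat -> mat, (forall n, G (u n)) /\
    injective (fun n => act (u n) z) /\
    forall e : R, 0 < e -> exists N, forall n, (N <= n)%N ->
      dist2 (act (u n) z) (x, 0) < e.

Definition limit_point_inf (G : mat -> Prop) : Prop :=
  exists z, inH z /\ exists u : nat -> mat, (forall n, G (u n)) /\
    injective (fun n => act (u n) z) /\
    forall M : R, exists N, forall n, (N <= n)%N ->
      M < dist2 (act (u n) z) (0, 0).

(* the ordinary set (complement of the limit set in R u {oo}) contains a
   neighbourhood {oo} u {x : |x| > M} of oo *)
Definition ordinary_nbhd_inf (G : mat -> Prop) : Prop :=
  exists M : R, ~ limit_point_inf G /\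
    forall x : R, M < `|x| -> ~ limit_point_real G x.

Definition cz_d2 (g : mat) (z : R * R) : R :=
  (mc g * z.1 + md g) ^+ 2 + (mc g * z.2) ^+ 2.

Definition Icirc (g : mat) (z : R * R) : Prop := inH z /\ cz_d2 g z = 1.
Definition extI (g : mat) (z : R * R) : Prop := inH z /\ 1 < cz_d2 g z.

Definition Kset (G : mat -> Prop) (z : R * R) : Prop :=
  inH z /\ forall g, G g -> ~ is_id g -> extI g z.

Definition Gamma_REL (G : mat -> Prop) (g : mat) : Prop :=
  G g /\ ~ is_id g /\
  exists z1 z2, z1 <> z2 /\ Icirc g z1 /\ bdH (Kset G) z1 /\
                Icirc g z2 /\ bdH (Kset G) z2.

(* alpha largest / beta smallest with  bd K  in  pr^-1([alpha, beta]) *)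
Definition lb_bdK (G : mat -> Prop) (a : R) : Prop :=
  forall z, bdH (Kset G) z -> a <= z.1.
Definition ub_bdK (G : mat -> Prop) (b : R) : Prop :=
  forall z, bdH (Kset G) z -> z.1 <= b.

Definition tmat (l : R) : mat := Mat 1 l 0 1.

(* subgroup of PSL(2,R) generated by S (as a +-closed subset of SL(2,R)) *)
Inductive gen (S : mat -> Prop) : mat -> Prop :=
| gen_id : gen S mid
| gen_negid : gen S (mneg mid)
| gen_mul : forall g h, S g -> gen S h -> gen S (mmul g h)
| gen_invmul : forall g h, S g -> gen S h -> gen S (mmul (minv g) h).

Definition Gamma_W (G : mat -> Prop) (l : R) : mat -> Prop :=
  gen (fun g => Gamma_REL G g \/ g = tmat l).

End Defs.

From Pilot Require Import Defs.
From mathcomp Require Import all_boot all_order all_algebra.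
From mathcomp Require Import all_classical all_reals all_analysis.
From mathcomp Require Import ring lra zify.
Import Order.TTheory GRing.Theory Num.Theory.
Local Open Scope ring_scope.

(* Every element of the group generated by G \ {+-1} and t = t_lambda is +-t^n or
   t^p u t^q with u an alternating word g_1 t^(n_1) g_2 ... t^(n_(k-1)) g_k, where the g_i
   are nontrivial in G and the n_i are nonzero.  A nontrivial g and its inverse lower
   every point of K, so g maps K into its complement; and K contains every point outside
   the strip alpha <= x <= beta, which translation by a nonzero multiple of lambda maps
   out of alpha' < x < beta'.  By ping-pong, u maps the points outside alpha' < x < beta'
   into the strip.  An element with c = 0 acts as z |-> a^2 z + ab and cannot do so;
   hence only +-t^n fix oo.
   K contains the points outside the strip because it contains the high points of every
   vertical line (the top of the complement of K on such a line is a boundary point).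
   Otherwise G would contain infinitely many elements sending a fixed point to height
   >= 1 (an element with c = 0 among them is parabolic, which is excluded, or its powers
   do so).  This is impossible: an unbounded orbit makes oo a limit point, and along a
   bounded orbit the matrix entries are bounded, so discreteness allows only finitely
   many elements. *)

Section Moebius.
Variable R : realType.
#[local] Set Implicit Arguments.
#[local] Unset Strict Implicit.
Implicit Types (g h : mat R) (z : R * R).
Local Notation mid := (Defs.mid R).

Lemma mat_ext g h :
  ma g = ma h -> mb g = mb h -> mc g = mc h -> md g = md h -> g = h.
Proof. by case: g => ????; case: h => ???? /= -> -> -> ->. Qed.

Lemma mmulA g h k : mmul g (mmul h k) = mmul (mmul g h) k.
Proof. by apply: mat_ext => /=; ring. Qed.

Lemma mmul1m g : mmul mid g = g.
Proof. by apply: mat_ext => /=; ring. Qed.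

Lemma mmulm1 g : mmul g mid = g.
Proof. by apply: mat_ext => /=; ring. Qed.

Lemma mmulVm g : mdet g = 1 -> mmul (minv g) g = mid.
Proof.
by case: g => a b c d; rewrite /mdet /= => det1; apply: mat_ext => /=; rewrite -?det1; ring.
Qed.

Lemma mmulmV g : mdet g = 1 -> mmul g (minv g) = mid.
Proof.
by case: g => a b c d; rewrite /mdet /= => det1; apply: mat_ext => /=; rewrite -?det1; ring.
Qed.

Lemma minvK g : minv (minv g) = g.
Proof. by case: g => a b c d; rewrite /minv /= !opprK. Qed.

Lemma mnegK g : mneg (mneg g) = g.
Proof. by apply: mat_ext => /=; rewrite opprK. Qed.

Lemma mmulNl g h : mmul (mneg g) h = mneg (mmul g h).
Proof. by apply: mat_ext => /=; ring. Qed.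

Lemma mmulNr g h : mmul g (mneg h) = mneg (mmul g h).
Proof. by apply: mat_ext => /=; ring. Qed.

Lemma mdetM g h : mdet (mmul g h) = mdet g * mdet h.
Proof. by rewrite /mdet /=; ring. Qed.

Lemma mdetV g : mdet (minv g) = mdet g.
Proof. by rewrite /mdet /=; ring. Qed.

Lemma minv_is_id g : is_id g -> minv g = g.
Proof. by case=> ->; apply: mat_ext => /=; rewrite ?opprK ?oppr0. Qed.

Lemma cz_d2_gt0 g z : mdet g = 1 -> 0 < z.2 -> 0 < cz_d2 g z.
Proof.
case: g => a b c d; rewrite /mdet /cz_d2 /= => det1 y0.
have [c0 | c0] := eqVneq c 0.
  rewrite c0 mulr0 subr0 in det1; rewrite c0 !mul0r add0r expr0n /= addr0.
  rewrite exprn_even_gt0 //.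
  by apply: contra_eqN det1 => /eqP ->; rewrite mulr0 eq_sym oner_eq0.
have := sqr_ge0 (c * z.1 + d).
have : 0 < (c * z.2) ^+ 2 by rewrite exprn_even_gt0 //= mulf_neq0 // gt_eqF.
lra.
Qed.

Definition re_num g z : R :=
  (ma g * z.1 + mb g) * (mc g * z.1 + md g) + ma g * mc g * z.2 ^+ 2.

Lemma act_re g z : (act g z).1 = re_num g z / cz_d2 g z.
Proof. by []. Qed.

Lemma act_im g z : (act g z).2 = mdet g * z.2 / cz_d2 g z.
Proof. by []. Qed.

Lemma act_im_gt0 g z : mdet g = 1 -> 0 < z.2 -> 0 < (act g z).2.
Proof. by move=> det1 y0; rewrite act_im det1 mul1r divr_gt0 // cz_d2_gt0. Qed.

Lemma cz_d2M g h z : mdet h = 1 -> 0 < z.2 ->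
  cz_d2 (mmul g h) z = cz_d2 g (act h z) * cz_d2 h z.
Proof.
move=> det1 y0; have := cz_d2_gt0 det1 y0.
case: g h det1 => a b c d [a' b' c' d']; rewrite /act /cz_d2 /mdet /= => _ D0.
by field; rewrite gt_eqF.
Qed.

Lemma re_numM g h z : mdet h = 1 -> 0 < z.2 ->
  re_num (mmul g h) z = re_num g (act h z) * cz_d2 h z.
Proof.
move=> det1 y0; have := cz_d2_gt0 det1 y0.
case: g h det1 => a b c d [a' b' c' d']; rewrite /act /re_num /cz_d2 /mdet /= => _ D0.
by field; rewrite gt_eqF.
Qed.

Lemma act_mul g h z : mdet g = 1 -> mdet h = 1 -> 0 < z.2 ->
  act (mmul g h) z = act g (act h z).
Proof.
move=> detg deth y0.
have Dh := cz_d2_gt0 deth y0.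
have Dg := cz_d2_gt0 detg (act_im_gt0 deth y0).
rewrite [LHS]surjective_pairing [RHS]surjective_pairing.
rewrite (act_re (mmul g h)) (act_im (mmul g h)) re_numM // cz_d2M // mdetM.
rewrite (act_re g) (act_im g) (act_im h).
by congr pair; field; rewrite !gt_eqF.
Qed.

Lemma act_id z : act mid z = z.
Proof. by case: z => x y; rewrite /act /mdet /=; congr pair; field. Qed.

Definition tpow (l : R) (n : int) : mat R := tmat (n%:~R * l).

Lemma tmatD (s t : R) : mmul (tmat s) (tmat t) = tmat (s + t).
Proof. by apply: mat_ext => /=; ring. Qed.

Lemma tpowD (l : R) m n : mmul (tpow l m) (tpow l n) = tpow l (m + n).
Proof. by rewrite /tpow tmatD intrD mulrDl. Qed.

Lemma tpow0 (l : R) : tpow l 0 = mid.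
Proof. by apply: mat_ext => /=; rewrite ?mul0r. Qed.

Lemma tpow1 (l : R) : tpow l 1 = tmat l.
Proof. by rewrite /tpow mul1r. Qed.

Lemma tpowN1 (l : R) : tpow l (-1) = minv (tmat l).
Proof. by apply: mat_ext => /=; rewrite ?mulN1r ?oppr0. Qed.

Lemma mdet_tpow (l : R) n : mdet (tpow l n) = 1.
Proof. by rewrite /mdet /=; ring. Qed.

Lemma mpow_tmat (l : R) n : mpow (tmat l) n = tpow l n.
Proof.
case: n => k /=.
  elim: k => [|k IH] /=; first by rewrite tpow0.
  by rewrite IH -tpow1 tpowD; congr tpow; lia.
rewrite NegzE; elim: k => [|k IH] /=; first by rewrite mmulm1 -tpowN1.
by rewrite IH -tpowN1 tpowD; congr tpow; lia.
Qed.

Lemma act_tpow (l : R) n z : act (tpow l n) z = (z.1 + n%:~R * l, z.2).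
Proof. by case: z => x y; rewrite /act /mdet /=; congr pair; field. Qed.

Section Subgroup.
Variable G : mat R -> Prop.
Hypothesis hG : psl_subgroup G.

Lemma subgroup_det g : G g -> mdet g = 1.
Proof. by case: hG => + _ _ _ _; apply. Qed.

Lemma subgroup_mul g h : G g -> G h -> G (mmul g h).
Proof. by case: hG => _ _ _ + _; apply. Qed.

Lemma subgroup_inv g : G g -> G (minv g).
Proof. by case: hG => _ _ _ _; apply. Qed.

Lemma subgroup_neg g : G g -> G (mneg g).
Proof.
have -> : mneg g = mmul (mneg mid) g by apply: mat_ext => /=; ring.
by case: hG => _ _ Gneg1 _ _; apply: subgroup_mul.
Qed.

Definition nontriv g := G g /\ ~ is_id g.

Lemma nontriv_inv g : nontriv g -> nontriv (minv g).
Proof.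
move=> [Gg ng]; split; first exact: subgroup_inv.
by move=> idg; apply: ng; rewrite -(minvK g) minv_is_id.
Qed.

Lemma nontriv_neg g : nontriv g -> nontriv (mneg g).
Proof.
move=> [Gg ng]; split; first exact: subgroup_neg.
by case=> e; apply: ng; rewrite -(mnegK g) e ?mnegK; [right | left].
Qed.

Lemma nontriv_mul g h : G g -> G h -> ~ is_id (mmul g h) -> nontriv (mmul g h).
Proof. by move=> Gg Gh; split => //; apply: subgroup_mul. Qed.

Lemma notin_Kset z : 0 < z.2 -> ~ Kset G z -> exists g, nontriv g /\ cz_d2 g z <= 1.
Proof.
move=> y0 nK; apply: contrapT => nog; apply: nK; split => // g Gg ng; split => //.
by rewrite ltNge; apply/negP => le1; apply: nog; exists g.
Qed.

(* [g] moves the points of [Kset G] strictly down, and so does [minv g] on [act g z]. *)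
Lemma Kset_act_nontriv z g : Kset G z -> nontriv g -> ~ Kset G (act g z).
Proof.
move=> [y0 Kz] [Gg ng] [_ Kgz].
have det1 := subgroup_det Gg.
have [_ ext_g] := Kz g Gg ng.
have [_ ext_ginv] := Kgz _ (subgroup_inv Gg) (nontriv_inv (conj Gg ng)).2.
have lower w h : mdet h = 1 -> 0 < w.2 -> 1 < cz_d2 h w -> (act h w).2 < w.2.
  move=> deth w0 gt1; rewrite act_im deth mul1r ltr_pdivrMr ?(lt_trans ltr01) //.
  by rewrite -[X in X < _]mulr1 ltr_pM2l.
have := lower _ _ (etrans (mdetV g) det1) (act_im_gt0 det1 y0) ext_ginv.
rewrite -act_mul ?mdetV // mmulVm // act_id.
by have := lower _ _ det1 y0 ext_g; lra.
Qed.

End Subgroup.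

Section NormalForm.
Variables (G : mat R -> Prop) (l : R).
Hypothesis hG : psl_subgroup G.

Inductive alt_word : mat R -> Prop :=
| AltSingle g : nontriv G g -> alt_word g
| AltCons g n u : nontriv G g -> n != 0 -> alt_word u ->
    alt_word (mmul g (mmul (tpow l n) u)).

Definition normal_form h :=
  (exists n, h = tpow l n \/ h = mneg (tpow l n)) \/
  exists p q u, alt_word u /\ h = mmul (tpow l p) (mmul u (tpow l q)).

Lemma alt_word_neg u : alt_word u -> alt_word (mneg u).
Proof.
case=> [g ng | g n u' ng n0 au]; first exact/AltSingle/nontriv_neg.
by rewrite -mmulNl; apply: AltCons => //; apply: nontriv_neg.
Qed.

Lemma alt_word_det u : alt_word u -> mdet u = 1.
Proof.
elim=> [g [Gg _] | g n u' [Gg _] _ _ IH]; first exact: (subgroup_det hG).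
by rewrite !mdetM mdet_tpow IH (subgroup_det hG Gg) !mul1r.
Qed.

Lemma normal_form_tpowl k h : normal_form h -> normal_form (mmul (tpow l k) h).
Proof.
case=> [[n [->|->]] | [p [q [u [au ->]]]]].
- by left; exists (k + n); left; rewrite tpowD.
- by left; exists (k + n); right; rewrite mmulNr tpowD.
- by right; exists (k + p), q, u; split => //; rewrite mmulA tpowD.
Qed.

Lemma normal_form_tpowr k h : normal_form h -> normal_form (mmul h (tpow l k)).
Proof.
case=> [[n [->|->]] | [p [q [u [au ->]]]]].
- by left; exists (n + k); left; rewrite tpowD.
- by left; exists (n + k); right; rewrite mmulNl tpowD.
- by right; exists p, (q + k), u; split => //; rewrite -!mmulA tpowD.
Qed.

Lemma normal_form_alt_word g u : nontriv G g -> alt_word u -> normal_form (mmul g u).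
Proof.
move=> ng; case=> [g1 ng1 | g1 n u' ng1 n0 au'].
  have [[-> | ->] | ne] := pselect (is_id (mmul g g1)).
  - by left; exists 0; left; rewrite tpow0.
  - by left; exists 0; right; rewrite tpow0.
  right; exists 0, 0, (mmul g g1); split; last by rewrite tpow0 mmul1m mmulm1.
  by apply/AltSingle/nontriv_mul => //; [case: ng | case: ng1].
rewrite mmulA; have [[-> | ->] | ne] := pselect (is_id (mmul g g1)).
- by right; exists n, 0, u'; rewrite mmul1m tpow0 mmulm1.
- right; exists n, 0, (mneg u'); split; first exact: alt_word_neg.
  by rewrite tpow0 mmulm1 mmulNr mmulNl mmul1m.
right; exists 0, 0, (mmul (mmul g g1) (mmul (tpow l n) u')).
split; last by rewrite tpow0 mmul1m mmulm1.
by apply: AltCons => //; apply: nontriv_mul => //; [case: ng | case: ng1].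
Qed.

Lemma normal_form_nontriv g h : nontriv G g -> normal_form h -> normal_form (mmul g h).
Proof.
move=> ng; case=> [[n [->|->]] | [p [q [u [au ->]]]]].
- by right; exists 0, n, g; split; [exact: AltSingle | rewrite tpow0 mmul1m].
- right; exists 0, n, (mneg g); split; first exact/AltSingle/nontriv_neg.
  by rewrite tpow0 mmul1m mmulNr mmulNl.
have [-> | p0] := eqVneq p 0.
  by rewrite tpow0 mmul1m mmulA; apply/normal_form_tpowr/normal_form_alt_word.
right; exists 0, q, (mmul g (mmul (tpow l p) u)); split; first exact: AltCons.
by rewrite tpow0 mmul1m !mmulA.
Qed.

Lemma gen_normal_form (S : mat R -> Prop) h :
  (forall g, S g -> nontriv G g \/ g = tmat l) -> gen S h -> normal_form h.
Proof.
move=> hS; elim=> [| | g {}h Sg _ IH | g {}h Sg _ IH].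
- by left; exists 0; left; rewrite tpow0.
- by left; exists 0; right; rewrite tpow0.
- case: (hS _ Sg) => [ng | ->]; first exact: normal_form_nontriv.
  by rewrite -tpow1; apply: normal_form_tpowl.
- case: (hS _ Sg) => [ng | ->]; first by apply: normal_form_nontriv => //; apply: nontriv_inv.
  by rewrite -tpowN1; apply: normal_form_tpowl.
Qed.

Lemma gen_tpow (S : mat R -> Prop) n :
  S (tmat l) -> gen S (tpow l n) /\ gen S (mneg (tpow l n)).
Proof.
move=> St.
have up (k : nat) : gen S (tpow l k) /\ gen S (mneg (tpow l k)).
  elim: k => [|k [IH IHN]]; first by rewrite tpow0; split; constructor.
  have -> : tpow l k.+1 = mmul (tmat l) (tpow l k).
    by rewrite -tpow1 tpowD; congr tpow; lia.
  by rewrite -mmulNr; split; apply: gen_mul.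
have down (k : nat) : gen S (tpow l (- k%:Z)) /\ gen S (mneg (tpow l (- k%:Z))).
  elim: k => [|k [IH IHN]]; first by rewrite oppr0 tpow0; split; constructor.
  have -> : tpow l (- k.+1%:Z) = mmul (minv (tmat l)) (tpow l (- k%:Z)).
    by rewrite -tpowN1 tpowD; congr tpow; lia.
  by rewrite -mmulNr; split; apply: gen_invmul.
by case: n => k; [exact: up | rewrite NegzE; exact: down].
Qed.

End NormalForm.

Section PingPong.
Variables (G : mat R -> Prop) (alpha beta alpha' beta' : R).
Hypothesis hG : psl_subgroup G.
Hypotheses (ha' : alpha' < alpha) (hb' : beta < beta').
Hypothesis hKoff :
  forall z, 0 < z.2 -> z.1 < alpha \/ beta < z.1 -> Kset G z.
Local Notation l := (beta' - alpha').

Definition compl_Kset z := 0 < z.2 /\ ~ Kset G z.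
Definition off_strip z := 0 < z.2 /\ (z.1 < alpha' \/ beta' < z.1).

Lemma compl_Kset_strip z : compl_Kset z -> alpha <= z.1 /\ z.1 <= beta.
Proof.
by move=> [y0 nK]; split; rewrite leNgt; apply/negP => out; apply/nK/hKoff; tauto.
Qed.

Lemma nontriv_off_strip g z : nontriv G g -> off_strip z -> compl_Kset (act g z).
Proof.
move=> ng [y0 out]; split; first exact/act_im_gt0/y0/(subgroup_det hG)/ng.1.
apply: (Kset_act_nontriv hG _ ng); apply: hKoff y0 _.
by case: out => lt; [left; apply: lt_trans ha' | right; apply: lt_trans hb' _].
Qed.

Lemma tpow_compl_Kset n z : n != 0 -> compl_Kset z -> off_strip (act (tpow l n) z).
Proof.
move=> n0 Xz; have [lo hi] := compl_Kset_strip Xz.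
have l0 : 0 < l by move: ha' hb'; lra.
rewrite act_tpow; split; first exact: Xz.1.
have [n_neg | n_pos] := ltP n 0; [left | right].
  have : n <= -1 by lia.
  rewrite -(ler_int R) => /(ler_wpM2r (ltW l0)); rewrite mulN1r /=; move: ha' hb'; lra.
have : 1 <= n by lia.
rewrite -(ler_int R) => /(ler_wpM2r (ltW l0)); rewrite mul1r /=; move: ha' hb'; lra.
Qed.

Lemma alt_word_off_strip u z : alt_word G l u -> off_strip z -> compl_Kset (act u z).
Proof.
move=> au; elim: au z => [g ng | g n u' ng n0 au' IH] z Xz.
  exact: nontriv_off_strip.
have y0 := Xz.1; have detg := subgroup_det hG ng.1; have detu := alt_word_det hG au'.
rewrite act_mul ?mdetM ?mdet_tpow ?detu ?mul1r // act_mul ?mdet_tpow //.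
exact/nontriv_off_strip/tpow_compl_Kset/IH.
Qed.

Lemma alt_word_mc_neq0 u : alt_word G l u -> mc u != 0.
Proof.
move=> au; apply/eqP => c0.
have := alt_word_det hG au; rewrite /mdet c0 mulr0 subr0 => ad.
have d0 : md u != 0 by apply: contra_eqN ad => /eqP ->; rewrite mulr0 eq_sym oner_eq0.
have a_inv : ma u = (md u)^-1 by apply: (mulIf d0); rewrite ad mulVf.
have a2 : 0 < ma u ^+ 2 by rewrite exprn_even_gt0 //= a_inv invr_eq0.
pose x := Num.max (beta' + 1) ((beta + 1 - ma u * mb u) / ma u ^+ 2).
have Xx : off_strip (x, 1).
  split => //=; right; have : beta' + 1 <= x by rewrite le_max lexx.
  lra.
have [_] := compl_Kset_strip (alt_word_off_strip au Xx).
have -> : (act u (x, 1)).1 = ma u ^+ 2 * x + ma u * mb u.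
  by rewrite act_re /re_num /cz_d2 c0 /= a_inv; field.
have : (beta + 1 - ma u * mb u) / ma u ^+ 2 <= x by rewrite le_max lexx orbT.
by rewrite ler_pdivrMr //; lra.
Qed.

End PingPong.

Lemma abs_le_1_add_sqr (x : R) : `|x| <= 1 + x ^+ 2.
Proof. by rewrite -real_normK ?num_real //; have := sqr_ge0 (`|x| - 1); nra. Qed.

Lemma coef_sqr_bound (p q x y K : R) : 0 < y ->
  (p * x + q) ^+ 2 + (p * y) ^+ 2 <= K ->
  p ^+ 2 <= K / y ^+ 2 /\ q ^+ 2 <= 2 * K + 2 * (K / y ^+ 2 * x ^+ 2).
Proof.
move=> y0 le_K.
have pK : p ^+ 2 <= K / y ^+ 2.
  by rewrite ler_pdivlMr ?exprn_gt0 // -exprMn; have := sqr_ge0 (p * x + q); lra.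
split => //.
have px : (p * x) ^+ 2 <= K / y ^+ 2 * x ^+ 2 by rewrite exprMn ler_wpM2r ?sqr_ge0.
have -> : q = (p * x + q) - p * x by ring.
have := sqr_ge0 (p * x + q + p * x); have := sqr_ge0 (p * y); nra.
Qed.

Lemma norm_act_numer g z : 0 < cz_d2 g z ->
  (ma g * z.1 + mb g) ^+ 2 + (ma g * z.2) ^+ 2 = dist2 (act g z) (0, 0) * cz_d2 g z.
Proof. by rewrite /dist2 /act /cz_d2 /mdet /= => D0; field; rewrite gt_eqF. Qed.

(* A lower bound on the height of [act g z] bounds [|cz + d|], and a bound on
   [|act g z|] then bounds [|az + b|]. *)
Lemma entries_bound z (eta B : R) : 0 < z.2 -> 0 < eta ->
  exists C, forall g, mdet g = 1 -> eta <= (act g z).2 ->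
    dist2 (act g z) (0, 0) <= B ->
    [/\ `|ma g| <= C, `|mb g| <= C, `|mc g| <= C & `|md g| <= C].
Proof.
move=> y0 eta0.
pose K := (1 + `|B|) * (z.2 / eta).
pose S := K / z.2 ^+ 2 + 2 * K + 2 * (K / z.2 ^+ 2 * z.1 ^+ 2).
exists (1 + S) => g det1 high near.
have D0 := cz_d2_gt0 det1 y0.
have P0 : 0 < z.2 / eta by rewrite divr_gt0.
have cd_le : cz_d2 g z <= z.2 / eta.
  by rewrite ler_pdivlMr // mulrC -ler_pdivlMr // -[z.2]mul1r -det1.
have cdK : cz_d2 g z <= K by rewrite /K; have := normr_ge0 B; nra.
have abK : (ma g * z.1 + mb g) ^+ 2 + (ma g * z.2) ^+ 2 <= K.
  rewrite norm_act_numer //.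
  have D2 : 0 <= dist2 (act g z) (0, 0) by rewrite addr_ge0 ?sqr_ge0.
  have := ler_norm B; have := ler_pM D2 (ltW D0) near cd_le; rewrite /K; nra.
have K0 : 0 <= K by apply: le_trans (ltW D0) cdK.
have Ky : 0 <= K / z.2 ^+ 2 by rewrite divr_ge0 ?sqr_ge0.
have Kyx : 0 <= K / z.2 ^+ 2 * z.1 ^+ 2 by rewrite mulr_ge0 ?sqr_ge0.
have sqr_le t : t ^+ 2 <= K / z.2 ^+ 2 \/ t ^+ 2 <= 2 * K + 2 * (K / z.2 ^+ 2 * z.1 ^+ 2) ->
    `|t| <= 1 + S.
  by move=> le_t; apply: le_trans (abs_le_1_add_sqr t) _; rewrite lerD2l /S; lra.
have [c2 d2] := coef_sqr_bound y0 cdK.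
have [a2 b2] := coef_sqr_bound y0 abK.
by split; apply: sqr_le; tauto.
Qed.

Lemma truncn_eq_dist_lt1 (s t : R) :
  0 <= s -> 0 <= t -> Num.truncn s = Num.truncn t -> `|s - t| < 1.
Proof.
move=> s0 t0 st.
have /andP [s1 s2] := truncn_itv s0; have /andP [t1 t2] := truncn_itv t0.
rewrite st -natr1 in s1 s2; rewrite -natr1 in t2.
by rewrite ltr_norml; apply/andP; split; lra.
Qed.

Definition cell (C d x : R) : 'I_(Num.truncn (2 * C / d)).+1 :=
  inord (Num.truncn ((x + C) / d)).

Lemma cell_close (C d x y : R) : 0 < d -> `|x| <= C -> `|y| <= C ->
  cell C d x = cell C d y -> `|x - y| < d.
Proof.
move=> d0 xC yC.
have scaled t : `|t| <= C ->
    0 <= (t + C) / d /\ (Num.truncn ((t + C) / d) < (Num.truncn (2 * C / d)).+1)%N.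
  rewrite ler_norml => /andP [lo hi]; split; first by apply: divr_ge0; [lra | exact: ltW].
  by rewrite ltnS le_truncn // ler_pM2r ?invr_gt0 //; lra.
have [x0 xM] := scaled x xC; have [y0 yM] := scaled y yC.
move=> /(congr1 val); rewrite /cell /= !inordK // => /(truncn_eq_dist_lt1 x0 y0).
have -> : (x + C) / d - (y + C) / d = (x - y) / d by field; rewrite gt_eqF.
by rewrite normrM (gtr0_norm (x := d^-1)) ?invr_gt0 // ltr_pdivrMr // mul1r.
Qed.

Lemma nat_finType_collision (T : finType) (f : nat -> T) :
  exists i j, i <> j /\ f i = f j.
Proof.
pose g (k : 'I_#|T|.+1) := f k.
have /injectivePn [i [j ij gij]] : ~~ injectiveb g.
  by apply/injectiveP => /leq_card; rewrite card_ord ltnn.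
by exists i, j; split => // /val_inj eq_ij; rewrite eq_ij eqxx in ij.
Qed.

Lemma norm_mulB_le (C e p q r s : R) : `|p| <= C -> `|q| <= e -> `|r| <= C -> `|s| <= e ->
  `|p * q - r * s| <= 2 * C * e.
Proof.
move=> pC qe rC se; apply: le_trans (ler_normB _ _) _; rewrite !normrM.
have := ler_pM (normr_ge0 p) (normr_ge0 q) pC qe.
have := ler_pM (normr_ge0 r) (normr_ge0 s) rC se.
lra.
Qed.

Lemma incr_injective (f : nat -> R) : (forall i, f i < f i.+1) -> injective f.
Proof. by move=> f_incr; apply/inc_inj/le_mono/Order.NatMonotonyTheory.homo_ltn_lt. Qed.

Lemma unbounded_incr_subseq (f : nat -> R) : (forall B, exists k, B < f k) ->
  exists w : nat -> nat, (forall j, f (w j) < f (w j.+1)) /\ forall j, j%:R < f (w j).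
Proof.
move=> /choice [p hp].
pose w j := iter j (fun k => p (f k + 1)) (p 0).
have step j : f (w j) + 1 < f (w j.+1) by exact: hp.
exists w; split => [j | ]; first by have := step j; lra.
elim=> [|j IH]; first exact: hp.
by rewrite -natr1; apply: lt_trans (step j); rewrite ltrD2r.
Qed.

Lemma approach0_injective_seq (T : Type) (P : T -> Prop) (m : T -> R) :
  (forall e, 0 < e -> exists t, P t /\ 0 < m t < e) ->
  exists u : nat -> T, injective u /\ forall k, P (u k).
Proof.
move=> small.
have [t1 _] := small 1 ltr01.
have /choice [f hf] : forall e, exists t, 0 < e -> P t /\ 0 < m t < e.
  move=> e; have [e0 | _] := ltP 0 e; last by exists t1.
  by have [t ?] := small e e0; exists t.
pose u k := iter k (fun t => f (m t)) (f 1).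
have pos k : P (u k) /\ 0 < m (u k).
  elim: k => [|k [_ mk]]; first by have [? /andP []] := hf 1 ltr01.
  by have [? /andP []] := hf _ mk.
exists u; split => [|k]; last exact: (pos k).1.
apply: (@inj_compr _ _ _ (fun t => - m t)); apply: incr_injective => k /=.
by have [_ /andP [_]] := hf _ (pos k).2; rewrite ltrN2.
Qed.

Section Discrete.
Variable G : mat R -> Prop.
Hypotheses (hG : psl_subgroup G) (hdisc : discrete G).

(* Two members of a bounded sequence lie in the same grid cell, so their quotient
   is close to the identity. *)
Lemma bounded_seq_not_injective (u : nat -> mat R) (C : R) : (forall k, G (u k)) ->
  (forall k, [/\ `|ma (u k)| <= C, `|mb (u k)| <= C, `|mc (u k)| <= C & `|md (u k)| <= C]) ->
  ~ injective u.
Proof.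
move=> Gu uC inj_u; have [e [e0 far]] := hdisc.
have C0 : 0 <= C by case: (uC 0%N) => + _ _ _; apply: le_trans.
pose d := e / (2 * C + 1).
have d0 : 0 < d by rewrite divr_gt0 //; lra.
have Cd : 2 * C * d < e by rewrite /d mulrA ltr_pdivrMr; nra.
pose cells k := (cell C d (ma (u k)), cell C d (mb (u k)), cell C d (mc (u k)),
                 cell C d (md (u k))).
have [i [j [ij [ea eb ec ed]]]] := nat_finType_collision cells.
have [ai bi ci di] := uC i; have [aj bj cj dj] := uC j.
have close t t' : `|t| <= C -> `|t'| <= C -> cell C d t = cell C d t' -> `|t' - t| <= d.
  by move=> tC t'C /(cell_close d0 tC t'C); rewrite distrC => /ltW.
have det_i := subgroup_det hG (Gu i); rewrite /mdet in det_i.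
pose g := mmul (minv (u i)) (u j).
apply: (far g); first by apply: (subgroup_mul hG) => //; apply: (subgroup_inv hG).
  move=> g1; apply/ij/inj_u.
  by rewrite -[u i]mmulm1 -g1 /g mmulA mmulmV ?mmul1m // (subgroup_det hG).
split; apply: le_lt_trans Cd.
- have -> : ma g - 1 = md (u i) * (ma (u j) - ma (u i)) - mb (u i) * (mc (u j) - mc (u i)).
    by rewrite /g /= -det_i; ring.
  by apply: norm_mulB_le => //; apply: close.
- have -> : mb g = md (u i) * (mb (u j) - mb (u i)) - mb (u i) * (md (u j) - md (u i)).
    by rewrite /g /=; ring.
  by apply: norm_mulB_le => //; apply: close.
- have -> : mc g = ma (u i) * (mc (u j) - mc (u i)) - mc (u i) * (ma (u j) - ma (u i)).
    by rewrite /g /=; ring.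
  by apply: norm_mulB_le => //; apply: close.
- have -> : md g - 1 = ma (u i) * (md (u j) - md (u i)) - mc (u i) * (mb (u j) - mb (u i)).
    by rewrite /g /= -det_i; ring.
  by apply: norm_mulB_le => //; apply: close.
Qed.

Hypothesis hnolim : ~ limit_point_inf G.

Lemma orbit_bounded (u : nat -> mat R) z : (forall k, G (u k)) -> 0 < z.2 ->
  exists B, forall k, dist2 (act (u k) z) (0, 0) <= B.
Proof.
move=> Gu y0; apply: contrapT => no_bound.
have : forall B, exists k, B < dist2 (act (u k) z) (0, 0).
  move=> B; apply: contrapT => no_k; apply: no_bound; exists B => k.
  by rewrite leNgt; apply/negP => lt_k; apply: no_k; exists k.
move=> /unbounded_incr_subseq [w [w_incr w_big]].
apply: hnolim; exists z; split => //; exists (u \o w); split; first by move=> n; apply: Gu.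
split.
  apply: (@inj_compr _ _ _ (fun p => dist2 p (0, 0)) (fun n => act (u (w n)) z)).
  exact: incr_injective.
move=> M; exists (Num.truncn `|M|).+1 => n Nn.
apply: le_lt_trans (w_big n); apply: le_trans (ler_norm M) _.
by apply/ltW/(lt_le_trans (truncnS_gt _)); rewrite ler_nat.
Qed.

Lemma high_orbit_not_injective (u : nat -> mat R) z (eta : R) : (forall k, G (u k)) ->
  0 < z.2 -> 0 < eta -> (forall k, eta <= (act (u k) z).2) -> ~ injective u.
Proof.
move=> Gu y0 eta0 high.
have [B near] := orbit_bounded Gu y0.
have [C bound] := entries_bound B y0 eta0.
apply: (bounded_seq_not_injective (C := C) Gu) => k.
by apply: bound => //; apply: (subgroup_det hG).
Qed.

End Discrete.

Section KsetHigh.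
Variable G : mat R -> Prop.
Hypotheses (hG : psl_subgroup G) (hdisc : discrete G) (hnolim : ~ limit_point_inf G).
Hypothesis hnopar : forall g, G g -> ~ parabolic g.

(* [g] is [z |-> a^2 z + ab]: a translation (parabolic) if [d^2 = 1], and a
   dilation whose powers push [(0, 1)] upwards if [d^2 < 1]. *)
Lemma fixes_inf_nontriv_sqr_md g : nontriv G g -> mc g = 0 -> 1 < md g ^+ 2.
Proof.
move=> [Gg ng] c0; rewrite ltNge; apply/negP => d2_le1.
have := subgroup_det hG Gg; rewrite /mdet c0 mulr0 subr0 => ad.
have [/eqP d2_1 | d2_ne1] := eqVneq (md g ^+ 2) 1.
  apply: (hnopar Gg); split => //.
  move: d2_1; rewrite sqrf_eq1 => /orP [] /eqP d1; rewrite d1 in ad *.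
    by rewrite mulr1 in ad; rewrite ad ger0_norm; lra.
  by rewrite mulrN1 in ad; rewrite ler0_norm; lra.
have d2_lt1 : md g ^+ 2 < 1 by rewrite lt_neqAle d2_ne1.
have d2_gt0 : 0 < md g ^+ 2.
  by rewrite exprn_even_gt0 //=; apply: contra_eqN ad => /eqP ->; rewrite mulr0 eq_sym oner_eq0.
pose p k := iter k (mmul g) mid.
have pk k : [/\ G (p k), mc (p k) = 0 & md (p k) = md g ^+ k].
  elim: k => [|k [Gp cp dp]] /=; first by case: hG.
  by split; [exact: subgroup_mul | rewrite /= c0 cp; ring | rewrite /= c0 dp exprS; ring].
apply: (high_orbit_not_injective hG hdisc hnolim (u := p) (z := (0, 1)) (eta := 1)) => //.
- by move=> k; case: (pk k).
- move=> k; have [Gp cp dp] := pk k.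
  rewrite act_im (subgroup_det hG Gp) /cz_d2 cp dp /= !mul0r add0r expr0n /= addr0 mul1r.
  have -> : (md g ^+ k) ^+ 2 = (md g ^+ 2) ^+ k by rewrite -!exprM mulnC.
  rewrite ler_pdivlMr; last exact: exprn_gt0.
  by have := exprn_ile1 k (ltW d2_gt0) (ltW d2_lt1); lra.
- move=> i j /(congr1 (fun h => md h ^+ 2)) /=.
  have [_ _ ->] := pk i; have [_ _ ->] := pk j.
  by rewrite -!exprM !(mulnC _ 2) !exprM; apply: ieexprIn; rewrite ?lt_eqF.
Qed.

Lemma Kset_high x : exists Y, forall y, Y <= y -> Kset G (x, y).
Proof.
apply: contrapT => no_Y.
have low e : 0 < e ->
    exists g, (nontriv G g /\ cz_d2 g (x, 1) <= 1) /\ 0 < mc g ^+ 2 < e.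
  move=> e0.
  have [y [Yy nK]] : exists y, 1 + e^-1 <= y /\ ~ Kset G (x, y).
    apply: contrapT => all_K; apply: no_Y; exists (1 + e^-1) => y Yy.
    by apply: contrapT => nK; apply: all_K; exists y.
  have e1 : 0 < e^-1 by rewrite invr_gt0.
  have [g [ng low]] := notin_Kset (z := (x, y)) (ltac:(rewrite /=; lra)) nK.
  have c0 : mc g != 0.
    apply/eqP => c0; have := fixes_inf_nontriv_sqr_md ng c0.
    by move: low; rewrite /cz_d2 c0 /= !mul0r add0r expr0n /= addr0; lra.
  move: low; rewrite /cz_d2 /= exprMn => low.
  have y1 : 1 <= y by lra.
  have c2 : 0 < mc g ^+ 2 by rewrite exprn_even_gt0.
  have cy : mc g ^+ 2 <= mc g ^+ 2 * y by apply: ler_peMr => //; exact: ltW.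
  have cy2 : mc g ^+ 2 * y <= mc g ^+ 2 * y ^+ 2.
    by apply: ler_wpM2l; [exact: ltW | rewrite expr2; apply: ler_peMr => //; lra].
  have := sqr_ge0 (mc g * x + md g) => sq.
  exists g; split; first by split => //; rewrite /cz_d2 /= mulr1; lra.
  rewrite c2 /= -(ltr_pM2r e1) mulfV ?gt_eqF //.
  by apply: (@lt_le_trans _ _ (mc g ^+ 2 * y)); [rewrite ltr_pM2l //; lra | lra].
have [u [inj_u Pu]] := approach0_injective_seq low.
apply: (high_orbit_not_injective hG hdisc hnolim (z := (x, 1)) (eta := 1)) inj_u => //.
- by move=> k; have [[Gu _] _] := Pu k.
- move=> k; have [[Gu _] le1] := Pu k; have det1 := subgroup_det hG Gu.
  by rewrite act_im det1 mul1r ler_pdivlMr ?mul1r // cz_d2_gt0.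
Qed.

End KsetHigh.

Section Strip.
Variable G : mat R -> Prop.
Hypothesis hhigh : forall x, exists Y, forall y, Y <= y -> Kset G (x, y).

Lemma exists_pos_sqr_lt (e : R) : 0 < e -> exists2 d, 0 < d & d ^+ 2 < e.
Proof.
move=> e0; exists (Num.sqrt e / 2); first by rewrite divr_gt0 ?sqrtr_gt0.
by rewrite expr_div_n sqr_sqrtr ?ltW // ltr_pdivrMr //; lra.
Qed.

(* The supremum of the heights of points of the vertical line through [(x, y0)]
   outside [Kset G] gives a boundary point. *)
Lemma bdH_vertical x y0 : 0 < y0 -> ~ Kset G (x, y0) -> exists y, bdH (Kset G) (x, y).
Proof.
move=> y00 nK0.
pose A : set R := fun y => 0 < y /\ ~ Kset G (x, y).
have [Y hY] := hhigh x.
have supA : has_sup A.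
  split; first by exists y0.
  exists Y => y [_ nK]; rewrite leNgt; apply/negP => Yy.
  by apply/nK/hY/ltW.
have ubA := sup_upper_bound supA.
have s_ge : y0 <= sup A by apply: ubA.
have s0 : 0 < sup A by apply: lt_le_trans s_ge.
exists (sup A); split.
  split => //= e e0; have [d d0 de] := exists_pos_sqr_lt e0.
  exists (x, sup A + d); split.
    apply: contrapT => nK; have : sup A + d <= sup A by apply: ubA; split => //; lra.
    lra.
  by rewrite /dist2 /= subrr expr0n /= add0r addrAC subrr add0r.
move=> [_ [e [e0 int_e]]]; have [d d0 de] := exists_pos_sqr_lt e0.
have [y [y0' nK] lt_y] := sup_adherent d0 supA.
have y_le : y <= sup A by apply: ubA.
apply/nK/int_e => //.
rewrite /dist2 /= subrr expr0n /= add0r; apply: le_lt_trans de.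
by rewrite -sqrrN opprB ler_sqr ?nnegrE; lra.
Qed.

Lemma Kset_off_strip (alpha beta : R) : lb_bdK G alpha -> ub_bdK G beta ->
  forall z, 0 < z.2 -> z.1 < alpha \/ beta < z.1 -> Kset G z.
Proof.
move=> lb ub [x y] /= y0 out; apply: contrapT => nK.
have [y' bd] := bdH_vertical y0 nK.
by have := lb _ bd; have := ub _ bd; rewrite /=; case: out; lra.
Qed.

End Strip.

End Moebius.

Theorem lemma4p6 (R : realType) (G : mat R -> Prop)
  (hF : fuchsian G)
  (hgf : geometrically_finite G)
  (hnc : non_cocompact G)
  (hhyp : exists g, G g /\ hyperbolic g)
  (hnopar : forall g, G g -> ~ parabolic g)
  (harea : infinite_area G)
  (hord : ordinary_nbhd_inf G)
  (alpha beta : R)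
  (halpha : lb_bdK G alpha /\ forall a, lb_bdK G a -> a <= alpha)
  (hbeta : ub_bdK G beta /\ forall b, ub_bdK G b -> beta <= b)
  (alpha' beta' : R) (ha' : alpha' < alpha) (hb' : beta < beta') :
  forall g : mat R,
    (Gamma_W G (beta' - alpha') g /\ fixes_inf g) <->
    exists n : int, g = mpow (tmat (beta' - alpha')) n \/
                    g = mneg (mpow (tmat (beta' - alpha')) n).
Proof.
have [[hG hdisc] [_ [nolim _]]] := (hF, hord).
have Koff := Kset_off_strip (Kset_high hG hdisc nolim hnopar) halpha.1 hbeta.1.
pose S h := Gamma_REL G h \/ h = tmat (beta' - alpha').
have S_gens h : S h -> nontriv G h \/ h = tmat (beta' - alpha').
  by case=> [[Gh [nh _]] | ->]; [left | right].
move=> g; split.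
  move=> [Wg fix_g].
  case: (gen_normal_form hG S_gens Wg) => [[n gn] | [p [q [u [au gu]]]]].
    by exists n; rewrite mpow_tmat.
  have := alt_word_mc_neq0 hG ha' hb' Koff au.
  suff -> : mc u = mc g by rewrite fix_g eqxx.
  by rewrite gu /=; ring.
move=> [n gn]; rewrite mpow_tmat in gn.
have [Wt WNt] := gen_tpow (S := S) n (or_intror erefl).
by case: gn => ->; split => //; rewrite /fixes_inf /= oppr0.
Qed.
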